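(* Let $K$ be a field. The characteristic function $\mathbb Z^k\to K$ of a polyhedral region in $\mathbb Z^k$ is a hypergeometric term on $\mathbb Z^k$.
   Context: A half-space is $\{\vec z\in\mathbb Z^k:\vec v\cdot\vec z>n\}$ with $\vec v\in\mathbb Z^k$, $n\in\mathbb Z$. A polyhedral region is either $\mathbb Z^k$ or an intersection of finitely many half-spaces. A hypergeometric term on $\mathbb Z^k$ over $K$ is a function $f\colon\mathbb Z^k\to K$ such that for each $i\in\{1,\dots,k\}$ there are nonzero polynomials $A_i,B_i\in K[\vec z]$ with $A_i(\vec z)f(\vec z)=B_i(\vec z)f(\vec z+\vec e_i)$ for all $\vec z\in\mathbb Z^k$. *)

From HB Require Import structures.
From mathcomp Require Import all_boot all_order all_algebra.
From mathcomp Require Import mpoly.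
Set Implicit Arguments. Unset Strict Implicit. Unset Printing Implicit Defensive.
Import Order.TTheory GRing.Theory Num.Theory.
Local Open Scope ring_scope.

Definition zpt (k : nat) := 'I_k -> int.

Definition shift_e (k : nat) (z : zpt k) (i : 'I_k) : zpt k :=
  fun j => z j + (j == i)%:R.

Definition zdot (k : nat) (v z : zpt k) : int := \sum_(j < k) v j * z j.

Definition in_half_space (k : nat) (v : zpt k) (n : int) (z : zpt k) : bool :=
  n < zdot v z.

Definition polyhedral_region (k : nat) (S : zpt k -> bool) : Prop :=
  (forall z, S z) \/
  exists hs : seq (zpt k * int),
    forall z, S z = all (fun p => in_half_space p.1 p.2 z) hs.

Definition char_fun (K : fieldType) (k : nat) (S : zpt k -> bool) : zpt k -> K :=
  fun z => if S z then 1 else 0.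

Definition zptK (K : fieldType) (k : nat) (z : zpt k) : 'I_k -> K :=
  fun j => (z j)%:~R.

Definition hypergeometric_term (K : fieldType) (k : nat) (f : zpt k -> K) : Prop :=
  forall i : 'I_k, exists A B : {mpoly K[k]},
    A != 0 /\ B != 0 /\
    forall z : zpt k, A.@[zptK K z] * f z = B.@[zptK K z] * f (shift_e z i).

From HB Require Import structures.
From mathcomp Require Import all_boot all_order all_algebra.
From mathcomp Require Import mpoly.
From mathcomp Require Import zify.
From Stdlib Require Import Classical.
Set Implicit Arguments. Unset Strict Implicit. Unset Printing Implicit Defensive.
Import Order.TTheory GRing.Theory Num.Theory.
Local Open Scope ring_scope.

(* If a nonzero polynomial P vanishes at every z where f z and f (z + e_i)
   differ, then P(z) f(z) = P(z) f(z + e_i) everywhere, so A = B = P witnesses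
   the hypergeometric relation in direction i.  For a polyhedral region such a
   P exists in characteristic 0: membership in a half-space v.z > n can only
   change between z and z + e_i when |v.z - n| <= |v_i|, so P is a product of
   the finitely many affine forms v.X - n + t with |t| <= |v_i|, over the
   half-spaces with v_i <> 0.  In characteristic p every integer z_i is
   congruent mod p to some a < p, so the product of the X_i - a vanishes on
   all of Z^k. *)

Lemma all_neq_has (T : Type) (a b : pred T) (s : seq T) :
  all a s != all b s -> has (fun x => a x != b x) s.
Proof. by elim: s => //= x s IH; case: (a x) (b x) => [] [] //= /IH ->. Qed.

Lemma intr_eq0_pchar0 (R : fieldType) (c : int) :
  has_pchar0 R -> (c%:~R == 0 :> R) = (c == 0).
Proof.
move/pcharf0P => natr_eq0; case: c => n; first exact: natr_eq0.
by rewrite NegzE mulrNz oppr_eq0 natr_eq0.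
Qed.

Section JumpAnnihilators.
Variables (K : fieldType) (k : nat).
Implicit Types (v z : zpt k) (i : 'I_k) (P : {mpoly K[k]}).

Definition jump_annihilator (T : eqType) P (f : zpt k -> T) i : Prop :=
  forall z, f z != f (shift_e z i) -> P.@[zptK K z] = 0.

Lemma hypergeometric_term_of_annihilators (f : zpt k -> K) :
  (forall i, exists2 P, P != 0 & jump_annihilator P f i) ->
  hypergeometric_term f.
Proof.
move=> annih i; have [P P_neq0 PfE] := annih i.
exists P, P; split=> [//|]; split=> [//|z].
by case: (eqVneq (f z) (f (shift_e z i))) => [->|/PfE ->] //; rewrite !mul0r.
Qed.

Lemma jump_annihilator_char_fun P (S : zpt k -> bool) i :
  jump_annihilator P S i -> jump_annihilator P (char_fun K S) i.
Proof.
move=> PS z; rewrite /char_fun.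
by have [->|/PS //] := eqVneq (S z) (S (shift_e z i)); rewrite eqxx.
Qed.

Lemma jump_annihilator_prod_all (T : Type) (s : seq T)
    (F : T -> {mpoly K[k]}) (S : T -> zpt k -> bool) i :
  (forall t, jump_annihilator (F t) (S t) i) ->
  jump_annihilator (\prod_(t <- s) F t) (fun z => all (S^~ z) s) i.
Proof.
move=> FS z /all_neq_has jump.
rewrite (big_morph _ (mevalM _) (meval1 _)); apply/eqP; rewrite prodf_seq_eq0.
by apply: (sub_has _ jump) => t /FS ->; rewrite eqxx.
Qed.

Lemma pchar_integer_annihilator p i : p \in [pchar K] ->
  exists2 P, P != 0 & forall z, P.@[zptK K z] = 0.
Proof.
move=> pcharKp; exists (\prod_(a < p) ('X_i - (a%:R)%:MP)).
  apply: (big_ind (fun P => P != 0)) => [|P Q|a _].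
  - exact: oner_neq0.
  - exact: mulf_neq0.
  apply: contra_neq (oner_neq0 K) => X_a0.
  have := congr1 (meval (fun=> a%:R + 1)) X_a0.
  by rewrite meval0 mevalB mevalXU mevalC addrC addKr.
have p_gt0 : (0 < p)%N by rewrite prime_gt0 // (pcharf_prime pcharKp).
move=> z; rewrite (big_morph _ (mevalM _) (meval1 _)); apply/eqP/prodf_eq0.
have zi_mod_lt : (absz (z i %% p)%Z < p)%N.
  by rewrite -ltz_nat gez0_abs ?modz_ge0 ?ltz_pmod ?ltz_nat // eqz_nat -lt0n.
exists (Ordinal zi_mod_lt) => //.
rewrite mevalB mevalXU mevalC /zptK /=.
have -> : (absz (z i %% p)%Z)%:R = (z i %% p)%Z%:~R :> K.
  by rewrite pmulrn gez0_abs // modz_ge0 // eqz_nat -lt0n.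
by rewrite -intrB -(dvdz_pcharf pcharKp) {1}(divz_eq (z i) p) addrK dvdz_mull.
Qed.

Lemma zdot_shift v z i : zdot v (shift_e z i) = zdot v z + v i.
Proof.
rewrite /zdot /shift_e; under eq_bigr => j _ do rewrite mulrDr.
rewrite big_split /=; congr (_ + _).
rewrite (bigD1 i) //= eqxx mulr1 big1 ?addr0 // => j /negPf ->.
by rewrite mulr0.
Qed.

Definition affine_mpoly v (c : int) : {mpoly K[k]} :=
  \sum_(l < k) (v l)%:~R *: 'X_l + (c%:~R)%:MP.

Lemma meval_affine_mpoly v c z : (affine_mpoly v c).@[zptK K z] = (zdot v z + c)%:~R.
Proof.
rewrite mevalD mevalC (big_morph _ (mevalD _) (meval0 _)) intrD rmorph_sum.
congr (_ + _); apply: eq_bigr => l _.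
by rewrite /= mevalZ mevalXU /zptK intrM.
Qed.

Lemma affine_mpoly_neq0 v c i : (v i)%:~R != 0 :> K -> affine_mpoly v c != 0.
Proof.
apply: contraNneq => v_c0; set z0 : zpt k := fun=> 0.
have := congr1 (meval (zptK K (shift_e z0 i))) v_c0.
have := congr1 (meval (zptK K z0)) v_c0.
rewrite !meval_affine_mpoly !meval0 zdot_shift => eval0 eval1.
have -> : v i = (zdot v z0 + v i + c) - (zdot v z0 + c) by lia.
by rewrite intrB eval0 eval1 subr0.
Qed.

Lemma half_space_shift_jump v n z i :
  in_half_space v n z != in_half_space v n (shift_e z i) ->
  `|zdot v z - n| <= `|v i|.
Proof. by rewrite /in_half_space zdot_shift; lia. Qed.

Definition half_space_annihilator v n i : {mpoly K[k]} :=
  if v i == 0 then 1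
  else \prod_(j < (2 * absz (v i)).+1) affine_mpoly v (j%:Z - (absz (v i))%:Z - n).

Lemma half_space_annihilatorP v n i :
  jump_annihilator (half_space_annihilator v n i) (in_half_space v n) i.
Proof.
move=> z jump; rewrite /half_space_annihilator.
have [vi0|vi_neq0] := eqVneq (v i) 0.
  by move: jump; rewrite /in_half_space zdot_shift vi0 addr0 eqxx.
have dist_le := half_space_shift_jump jump.
have j_lt : (absz (n - zdot v z + (absz (v i))%:Z)%R < (2 * absz (v i)).+1)%N.
  by rewrite -ltz_nat; lia.
rewrite (big_morph _ (mevalM _) (meval1 _)); apply/eqP/prodf_eq0.
exists (Ordinal j_lt) => //=; rewrite meval_affine_mpoly gez0_abs; last by lia.
by apply/eqP; rewrite -[0]/(0%:~R); congr _%:~R; lia.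
Qed.

Lemma half_space_annihilator_neq0 v n i :
  has_pchar0 K -> half_space_annihilator v n i != 0.
Proof.
move=> pchar0; rewrite /half_space_annihilator.
have [_|vi_neq0] := eqVneq (v i) 0; first exact: oner_neq0.
rewrite prodf_seq_neq0; apply/allP => j _; apply/implyP => _.
by apply: (@affine_mpoly_neq0 _ _ i); rewrite intr_eq0_pchar0.
Qed.

Lemma polyhedral_regionE (S : zpt k -> bool) : polyhedral_region S ->
  exists hs : seq (zpt k * int),
    forall z, S z = all (fun h => in_half_space h.1 h.2 z) hs.
Proof. by case=> [S_all|//]; exists [::] => z; rewrite S_all. Qed.

Lemma polyhedral_region_annihilator (S : zpt k -> bool) i :
  has_pchar0 K -> polyhedral_region S ->
  exists2 P, P != 0 & jump_annihilator P S i.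
Proof.
move=> pchar0 /polyhedral_regionE [hs S_hs].
exists (\prod_(h <- hs) half_space_annihilator h.1 h.2 i).
  apply: (big_ind (fun P => P != 0)) => [|P Q|h _].
  - exact: oner_neq0.
  - exact: mulf_neq0.
  - exact: half_space_annihilator_neq0.
move=> z; rewrite !S_hs.
exact: (jump_annihilator_prod_all (fun h => @half_space_annihilatorP h.1 h.2 i)).
Qed.

End JumpAnnihilators.

Theorem lemmaB20 (K : fieldType) (k : nat) (S : zpt k -> bool) :
  polyhedral_region S -> hypergeometric_term (char_fun K S).
Proof.
move=> S_poly; apply: hypergeometric_term_of_annihilators => i.
have [[p pcharKp]|no_pchar] := classic (exists p, p \in [pchar K]).
  have [P P_neq0 P_vanish] := pchar_integer_annihilator i pcharKp.
  by exists P => // z _; apply: P_vanish.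
have pchar0 : has_pchar0 K.
  by move=> p; apply/negP => pcharKp; apply: no_pchar; exists p.
have [P P_neq0 PS] := polyhedral_region_annihilator i pchar0 S_poly.
by exists P => //; apply: jump_annihilator_char_fun.
Qed.
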